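(* Let $n\ge2$. (1) For $w\in\mathfrak S_{2n+1}$, if the arcs $\alpha_1(w)=(w_{2n},w_{2n+1})$ and $\alpha_2(w)=(w_{2n-2},w_{2n-1})$ cross, then $w\in\mathfrak B_{2n+1}$ if and only if $\mathrm{std}(w_1\cdots w_{2n-1})\in\mathfrak B_{2n-1}$. (2) For $w\in\mathfrak S_{2n}$, if the arcs $\alpha_1(w)=(w_{2n},2n+1)$ and $\alpha_2(w)=(w_{2n-2},w_{2n-1})$ cross, then $w\in\mathfrak B_{2n}$ if and only if $\mathrm{std}(w_1\cdots w_{2n-1})\in\mathfrak B_{2n-1}$.
   Context: Standardization $\mathrm{std}$ of a word of distinct integers: the permutation of $\{1,\dots,r\}$ with the same relative order. Butler permutations $\mathfrak B_N$ ($N\ge2$): for $w\in\mathfrak S_N$ define directed arcs: if $N$ even, $\alpha_1=(w_N,N+1)$, $\alpha_r=(w_{N-2r+2},w_{N-2r+3})$ ($2\le r\le N/2$), $\alpha_{N/2+1}=(0,w_1)$; if $N$ odd, $\alpha_r=(w_{N-2r+1},w_{N-2r+2})$ ($1\le r\le(N-1)/2$), $\alpha_{(N+1)/2}=(0,w_1)$. Arc $(a,b)$ is forward if $a<b$, else reverse; $(a,b)$ is nested by $(c,d)$ if $\min(c,d)<a,b<\max(c,d)$; two arcs cross if exactly one endpoint of one lies strictly between the endpoints of the other. Let $k$ be least with $\alpha_k,\alpha_{k+1}$ non-crossing; if it exists, $w$ is Butler iff ($\alpha_{k+1}$ nested by $\alpha_k$ and $\alpha_k$ reverse) or ($\alpha_{k+1}$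 not nested by $\alpha_k$ and $\alpha_k$ forward); otherwise put $k=N/2$ ($N$ even) or $(N-1)/2$ ($N$ odd) and $w$ is Butler iff $\alpha_k$ is reverse. *)

From mathcomp Require Import all_boot.
Set Implicit Arguments. Unset Strict Implicit. Unset Printing Implicit Defensive.

Definition is_perm (N : nat) (w : seq nat) : bool := perm_eq w (iota 1 N).

(* 1-indexed letter w_i *)
Definition letter (w : seq nat) (i : nat) : nat := nth 0 w i.-1.

Definition std (s : seq nat) : seq nat :=
  [seq count (fun y => y <= x) s | x <- s].

Definition arc := (nat * nat)%type.

Definition forward (a : arc) : bool := a.1 < a.2.
Definition reverse (a : arc) : bool := ~~ forward a.

Definition strictly_between (x : nat) (a : arc) : bool :=
  (minn a.1 a.2 < x) && (x < maxn a.1 a.2).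

Definition nested (ab cd : arc) : bool :=
  strictly_between ab.1 cd && strictly_between ab.2 cd.

Definition cross (a b : arc) : bool :=
  (strictly_between b.1 a (+) strictly_between b.2 a)
  || (strictly_between a.1 b (+) strictly_between a.2 b).

Definition narcs (N : nat) : nat := if odd N then N.+1./2 else N./2.+1.

(* the arc alpha_r(w) for w in S_N, 1 <= r <= narcs N *)
Definition alpha (N : nat) (w : seq nat) (r : nat) : arc :=
  if odd N then
    (if r < N.+1./2 then (letter w (N - 2 * r + 1), letter w (N - 2 * r + 2))
     else (0, letter w 1))
  else
    (if r == 1 then (letter w N, N.+1)
     else if r <= N./2 then (letter w (N - 2 * r + 2), letter w (N - 2 * r + 3))
     else (0, letter w 1)).

Definition butler (N : nat) (w : seq nat) : bool :=
  let ks := [seq k <- iota 1 (narcs N).-1 |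
             ~~ cross (alpha N w k) (alpha N w k.+1)] in
  match ks with
  | k :: _ =>
      (nested (alpha N w k.+1) (alpha N w k) && reverse (alpha N w k))
      || (~~ nested (alpha N w k.+1) (alpha N w k) && forward (alpha N w k))
  | [::] => reverse (alpha N w (narcs N).-1)
  end.

(* Once alpha_1 and alpha_2 cross, the Butler test is decided by the arcs
   alpha_2, alpha_3, ... alone.  For N = 2n+1 and N = 2n alike these are the
   arcs (w_{2n-2k}, w_{2n-2k+1}) and finally (0, w_1): they involve only
   w_1 ... w_{2n-1}, and ranking maps them onto the arcs alpha_1, alpha_2, ...
   of std(w_1 ... w_{2n-1}).  Ranking is strictly increasing, so it preserves
   crossing, nesting and direction. *)

From Pilot Require Import Defs.
From mathcomp Require Import all_boot zify.

Set Implicit Arguments.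
Unset Strict Implicit.
Unset Printing Implicit Defensive.

Definition arc_map (g : nat -> nat) (a : Defs.arc) : Defs.arc := (g a.1, g a.2).

Lemma strictly_betweenE x (a : Defs.arc) : strictly_between x a =
  ((a.1 < x) && (x < a.2)) || ((a.2 < x) && (x < a.1)).
Proof.
case: a => a1 a2; rewrite /strictly_between /=.
by case: (ltnP a1 x) => ?; case: (ltnP x a2) => ?; case: (ltnP a2 x) => ?;
  case: (ltnP x a1) => ? //=; lia.
Qed.

Section ArcRelabel.
Variables (pT : predType nat) (S : pT) (g : nat -> nat).
Hypothesis g_mono : {in S &, {mono g : x y / x < y}}.

Definition arc_in (a : Defs.arc) := (a.1 \in S) && (a.2 \in S).

Lemma strictly_between_map x a : x \in S -> arc_in a ->
  strictly_between (g x) (arc_map g a) = strictly_between x a.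
Proof. by move=> xS /andP[a1S a2S]; rewrite !strictly_betweenE /= !g_mono. Qed.

Lemma cross_map a b : arc_in a -> arc_in b ->
  cross (arc_map g a) (arc_map g b) = cross a b.
Proof.
move=> /[dup] aS /andP[? ?] /[dup] bS /andP[? ?].
by rewrite /cross /= !strictly_between_map.
Qed.

Lemma nested_map a b : arc_in a -> arc_in b ->
  nested (arc_map g a) (arc_map g b) = nested a b.
Proof. by move=> /andP[? ?] bS; rewrite /nested /= !strictly_between_map. Qed.

Lemma forward_map a : arc_in a -> forward (arc_map g a) = forward a.
Proof. by move=> /andP[? ?]; rewrite /forward /= g_mono. Qed.

End ArcRelabel.

Definition butler_arcs (m : nat) (A : nat -> Defs.arc) : bool :=
  match [seq k <- iota 1 m | ~~ cross (A k) (A k.+1)] with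
  | k :: _ => (nested (A k.+1) (A k) && reverse (A k))
              || (~~ nested (A k.+1) (A k) && forward (A k))
  | [::] => reverse (A m)
  end.

Lemma butlerE N w : butler N w = butler_arcs (narcs N).-1 (alpha N w).
Proof. by []. Qed.

Lemma butler_arcs_behead m A : cross (A 1) (A 2) ->
  butler_arcs m.+1 A = butler_arcs m (fun k => A k.+1).
Proof.
move=> A12; rewrite /butler_arcs /= A12 -[2]/(1 + 1) iotaDl filter_map.
by case: [seq k <- iota 1 m | _].
Qed.

Lemma butler_arcs_map (pT : predType nat) (S : pT) g m A B : 0 < m ->
  {in S &, {mono g : x y / x < y}} ->
  (forall k, 0 < k <= m.+1 -> arc_in S (A k)) ->
  (forall k, 0 < k <= m.+1 -> B k = arc_map g (A k)) ->
  butler_arcs m B = butler_arcs m A.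
Proof.
move=> m_gt0 g_mono AS BE.
have index_in (k : nat) : k \in iota 1 m -> 0 < k <= m.+1 /\ 0 < k.+1 <= m.+1.
  by rewrite mem_iota; lia.
rewrite /butler_arcs.
have -> : [seq k <- iota 1 m | ~~ cross (B k) (B k.+1)]
        = [seq k <- iota 1 m | ~~ cross (A k) (A k.+1)].
  apply: eq_in_filter => k /index_in[k1 k2].
  by rewrite !BE // (cross_map g_mono) ?AS.
case E: [seq k <- iota 1 m | _] => [|k ks].
  have m1 : 0 < m <= m.+1 by lia.
  by rewrite BE // /reverse (forward_map g_mono) ?AS.
have := mem_head k ks.
rewrite -E mem_filter => /andP[_ /index_in[k1 k2]].
by rewrite !BE // /reverse (forward_map g_mono) ?(nested_map g_mono) ?AS.
Qed.

Definition rank (s : seq nat) (x : nat) : nat := count (fun y => y <= x) s.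

Lemma rank_homo s : {homo rank s : x y / x <= y}.
Proof. by move=> x y xy; apply: sub_count => z /= zx; apply: leq_trans xy. Qed.

Lemma rank_lt s x y : x < y -> y \in s -> rank s x < rank s y.
Proof.
move=> xy; elim: s => [|z s IH] //=; rewrite in_cons.
case/orP => [/eqP <-|ys].
  by rewrite leqnn (leqNgt y x) xy add1n ltnS rank_homo // ltnW.
by have := IH ys; case: (leqP z x) => zx; case: (leqP z y) => zy /=; lia.
Qed.

(* 0 is admitted because of the last arc (0, w_1). *)
Lemma rank_mono s : {in 0 :: s &, {mono rank s : x y / x < y}}.
Proof.
move=> x y _; rewrite in_cons => y0s; case: (ltnP x y) => xy.
  by apply: rank_lt; case/orP: y0s xy => // /eqP ->.
by apply/negbTE; rewrite -leqNgt rank_homo.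
Qed.

Lemma rank0 s : 0 \notin s -> rank s 0 = 0.
Proof.
move=> /count_memPn s0; rewrite -[RHS]s0.
by apply: eq_count => y; rewrite /= leqn0.
Qed.

Lemma letter_std_take L s i : 0 < i <= L -> L <= size s ->
  letter (std (take L s)) i = rank (take L s) (letter s i).
Proof.
move=> iL Ls; have iL' : i.-1 < L by lia.
by rewrite /letter /std (nth_map 0) ?size_takel ?nth_take.
Qed.

Lemma letter_mem_take L s i : 0 < i <= L -> L <= size s ->
  letter s i \in take L s.
Proof.
move=> iL Ls; have iL' : i.-1 < L by lia.
by rewrite /letter -(nth_take 0 iL') mem_nth ?size_takel.
Qed.

Lemma narcs_odd m : narcs m.*2.+1 = m.+1.
Proof. by rewrite /narcs oddS odd_double /= doubleK. Qed.

Lemma narcs_even m : narcs m.*2 = m.+1.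
Proof. by rewrite /narcs odd_double doubleK. Qed.

Lemma alpha_odd_succ m w k : alpha m.+1.*2.+1 w k.+1 = alpha m.*2.+1 w k.
Proof.
rewrite /alpha !oddS !odd_double /= !doubleK ltnS.
by case: ifP => // km; congr (letter w _, letter w _); lia.
Qed.

Lemma alpha_odd_first m w : 0 < m ->
  alpha m.*2.+1 w 1 = (letter w m.*2, letter w m.*2.+1).
Proof.
move=> m_gt0; rewrite /alpha oddS odd_double /= doubleK ltnS m_gt0.
by congr (letter w _, letter w _); lia.
Qed.

Lemma alpha_even_first m w : alpha m.*2 w 1 = (letter w m.*2, m.*2.+1).
Proof. by rewrite /alpha odd_double. Qed.

Lemma alpha_even_succ m w k : 0 < k -> alpha m.+1.*2 w k.+1 = alpha m.*2.+1 w k.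
Proof.
move=> k_gt0; rewrite /alpha oddS !odd_double /= !doubleK ltnS eqSS.
have -> : (k == 0) = false by lia.
by case: ifP => // km; congr (letter w _, letter w _); lia.
Qed.

Lemma alpha_in_take m s k : 0 < k -> m.*2.+1 <= size s ->
  arc_in (0 :: take m.*2.+1 s) (alpha m.*2.+1 s k).
Proof.
move=> k_gt0 ms; rewrite /arc_in /alpha oddS odd_double /= doubleK !in_cons.
by case: ifP => km /=; rewrite ?eqxx ?letter_mem_take ?orbT //; lia.
Qed.

Lemma alpha_std_take m s k : 0 < k -> m.*2.+1 <= size s -> 0 \notin s ->
  alpha m.*2.+1 (std (take m.*2.+1 s)) k
  = arc_map (rank (take m.*2.+1 s)) (alpha m.*2.+1 s k).
Proof.
move=> k_gt0 ms s0; rewrite /arc_map /alpha oddS odd_double /= doubleK.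
have t0 : 0 \notin take m.*2.+1 s by apply: contra s0; apply: mem_take.
by case: ifP => km /=; rewrite ?rank0 ?letter_std_take //; lia.
Qed.

Lemma perm_size_notin0 N w : is_perm N w -> size w = N /\ 0 \notin w.
Proof.
by move=> pw; rewrite (perm_size pw) size_iota (perm_mem pw) mem_iota.
Qed.

Lemma butler_drop_crossing_arc m N w : 0 < m -> narcs N = m.+2 ->
  m.*2.+1 <= size w -> 0 \notin w ->
  (forall k, 0 < k -> alpha N w k.+1 = alpha m.*2.+1 w k) ->
  cross (alpha N w 1) (alpha N w 2) ->
  butler N w = butler m.*2.+1 (std (take m.*2.+1 w)).
Proof.
move=> m_gt0 narcsN mw w0 alphaN cross12.
rewrite !butlerE narcsN narcs_odd /= butler_arcs_behead //.
symmetry; apply: (butler_arcs_map m_gt0 (@rank_mono (take m.*2.+1 w))).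
  by move=> k /andP[k_gt0 _]; rewrite alphaN // alpha_in_take.
by move=> k /andP[k_gt0 _]; rewrite alphaN // alpha_std_take.
Qed.

Theorem lemma4p5 (n : nat) (hn : 2 <= n) :
  (forall w : seq nat, is_perm (2 * n + 1) w ->
     cross (letter w (2 * n), letter w (2 * n + 1))
           (letter w (2 * n - 2), letter w (2 * n - 1)) ->
     (butler (2 * n + 1) w <-> butler (2 * n - 1) (std (take (2 * n - 1) w))))
  /\
  (forall w : seq nat, is_perm (2 * n) w ->
     cross (letter w (2 * n), 2 * n + 1)
           (letter w (2 * n - 2), letter w (2 * n - 1)) ->
     (butler (2 * n) w <-> butler (2 * n - 1) (std (take (2 * n - 1) w)))).
Proof.
have [m -> m_gt0] : exists2 m, n = m.+1 & 0 < m by exists n.-1; lia.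
have -> : 2 * m.+1 - 1 = m.*2.+1 by lia.
have -> : 2 * m.+1 - 2 = m.*2 by lia.
have -> : 2 * m.+1 + 1 = m.+1.*2.+1 by lia.
have -> : 2 * m.+1 = m.+1.*2 by lia.
split=> w /perm_size_notin0[sw w0] cross12.
- have mw : m.*2.+1 <= size w by rewrite sw; lia.
  have alphaN k : 0 < k -> alpha m.+1.*2.+1 w k.+1 = alpha m.*2.+1 w k.
    by rewrite alpha_odd_succ.
  rewrite (butler_drop_crossing_arc m_gt0 (narcs_odd _) mw w0 alphaN) //.
  by rewrite [alpha _ w 2]alpha_odd_succ !alpha_odd_first.
have mw : m.*2.+1 <= size w by rewrite sw; lia.
rewrite (butler_drop_crossing_arc m_gt0 (narcs_even _) mw w0
           (@alpha_even_succ m w)) //.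
by rewrite [alpha _ w 2]alpha_even_succ // alpha_even_first alpha_odd_first.
Qed.
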